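(* With the sequence $(f^{(k)},g^{(k)})_{k\ge0}$, $d_k$ and $\Delta_k$ defined as in the context, for every $k\ge 0$: (A) if $k$ is even then $\Delta_k=0$, and if $k$ is odd then $\Delta_k=1$ and $d_k=1$; (B) $(f^{(k+1)},g^{(k+1)})=(f^{(k)},\,z\,g^{(k)})$ if $k$ is even, and $(f^{(k+1)},g^{(k+1)})=(x f^{(k)}+g^{(k)},\,z f^{(k)})$ if $k$ is odd; (C) $|f^{(k+1)}|=\lfloor (k+3)/2\rfloor$; (D) $f^{(k+1)}(0,1)=g^{(k+1)}(0,1)=1$.
   Context: $\mathbb{F}=\mathrm{GF}(2)$, $R=\mathbb{F}[x,z]$, $|\cdot|$ is total degree. Let $(r_0,r_1,\ldots)$ be the binary sequence with $r_i=1$ if $i=2^j-1$ for some $j\ge 0$ and $r_i=0$ otherwise, i.e. $(1,1,0,1,0,0,0,1,0^7,1,\ldots)$. For $n\ge1$ its inverse form is $R^{(1-n)}=\sum_{j=1-n}^{0}r_{-j}\,x^{j}z^{1-n-j}\in\mathbb{F}[x^{-1},z^{-1}]$, a homogeneous Laurent form of degree $1-n$. For a form $f\in R$ and such a form $G$, $\Delta(f;G)$ is the coefficient of $x^{|f|+|G|}z^0$ in the product $f\cdot G$ computed in $\mathbb{F}[x^{\pm1},z^{\pm1}]$ if $|f|+|G|\le 0$, and $0$ otherwise. Define forms recursively: $(f^{(0)},g^{(0)})=(x+z,z)$; for $k\ge0$ let $d_k=|g^{(k)}|-|f^{(k)}|$ and $\Delta_k=\Delta(f^{(k)};R^{(-1-k)})$,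 and set $(f^{(k+1)},g^{(k+1)})=(f^{(k)},zg^{(k)})$ if $\Delta_k=0$; $=(f^{(k)}+x^{-d_k}g^{(k)},\,zg^{(k)})$ if $\Delta_k=1$ and $d_k\le0$; $=(x^{d_k}f^{(k)}+g^{(k)},\,zf^{(k)})$ if $\Delta_k=1$ and $d_k>0$. *)

From HB Require Import structures.
From mathcomp Require Import all_boot all_order all_algebra.
From mathcomp Require Import mpoly.
Set Implicit Arguments. Unset Strict Implicit. Unset Printing Implicit Defensive.
Import Order.TTheory GRing.Theory Num.Theory.
Local Open Scope ring_scope.

Notation F2 := 'F_2.
Notation R2 := {mpoly F2[2]}.
Definition X : R2 := 'X_(0 : 'I_2).
Definition Z : R2 := 'X_(1 : 'I_2).

(* Total degree |f| of a (nonzero) form: msize f = 1 + total degree. *)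
Definition tdeg (f : R2) : nat := (msize f).-1.

Definition rbit (i : nat) : bool := [exists j : 'I_i.+1, i.+1 == 2 ^ j]%N.
Definition rcoef (i : nat) : F2 := (rbit i)%:R.

(* Delta(f; R^(1-n)) for n >= 1.  R^(1-n) = sum_{j=1-n}^0 r_{-j} x^j z^(1-n-j);
   writing j = -i (0 <= i <= n-1), its monomials are r_i x^(-i) z^(1-n+i).
   The coefficient of x^(|f|+1-n) z^0 in the Laurent product f * R^(1-n) is
   the sum over monomials m of f and i < n with matching exponents;
   it is 0 if |f| + 1 - n > 0. *)
Definition Delta (f : R2) (n : nat) : F2 :=
  let e : int := (tdeg f)%:Z + (1 - n%:Z) in
  if e <= 0 then
    \sum_(m <- msupp f) \sum_(i < n)
       (if (((m (0 : 'I_2))%:Z - i%:Z == e) &&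
            ((m (1 : 'I_2))%:Z + (1 - n%:Z + i%:Z) == 0))
        then f@_m * rcoef i else 0)
  else 0.

Definition dd (p : R2 * R2) : int := (tdeg p.2)%:Z - (tdeg p.1)%:Z.

(* Delta_k = Delta(f^(k); R^(-1-k)), i.e. n = k + 2. *)
Definition Deltak (k : nat) (p : R2 * R2) : F2 := Delta p.1 k.+2.

(* One step of the recursion (Delta_k in GF(2) is 0 or 1). *)
Definition step (k : nat) (p : R2 * R2) : R2 * R2 :=
  let f := p.1 in let g := p.2 in let d := dd p in
  if Deltak k p == 0 then (f, Z * g)
  else if d <= 0 then (f + X ^+ `|d|%N * g, Z * g)
  else (X ^+ `|d|%N * f + g, Z * f).

Fixpoint fg (k : nat) : R2 * R2 :=
  match k with
  | 0 => (X + Z, Z)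
  | k'.+1 => step k' (fg k')
  end.

Definition pt01 : 'I_2 -> F2 := fun i => if i == 0 :> nat then 0 else 1.

From HB Require Import structures.
From mathcomp Require Import all_boot all_order all_algebra.
From mathcomp Require Import mpoly.
From mathcomp Require Import zify ring.
Import Order.TTheory GRing.Theory Num.Theory.
Local Open Scope ring_scope.

(* Proof of Theorem 4.  A form of degree D is identified with its coefficient
   sequence c : nat -> F2 through form D c = sum_(i <= D) c_i x^(D-i) z^i.
   For n > D, Delta(form D c; R^(1-n)) is the coefficient of t^(n-1) in
   c(t) * r(t), where r(t) = sum_i r_i t^i  (Delta_form).
   Let P_a(t) be the polynomials P_0 = 1, P_1 = 1 + t, P_(a+2) = P_(a+1) + t^2 P_a.
   The arithmetic heart of the proof (rconv_pattern_all) is that in P_a(t) r(t)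
   the coefficients of t^n vanish for a <= n < 2a and the coefficient of t^(2a)
   is 1; it is proved by strong induction on a, using r(t) = 1 + t r(t^2)
   (i.e. r_(2i+1) = r_i and r_(2i+2) = 0) and the decomposition of P_(2b+1),
   P_(2b+2) into even and odd parts expressed through P_(b+1) and P_b.
   This yields Delta_(2j) = 0, Delta_(2j+1) = 1 and d_(2j+1) = 1 along the
   closed forms  f^(2j) = f^(2j+1) = form_(j+1)(P_(j+1)),  g^(2j) = z form_j(P_j),
   g^(2j+1) = z^2 form_j(P_j)  (fg_closed), from which (A)-(D) are read off. *)

Lemma F2_char2 : (2 : F2) = 0.
Proof. exact: pchar_Fp_0 (isT : prime 2). Qed.

Ltac gf2 := ring: F2_char2.

Lemma F2_addxx (x : F2) : x + x = 0.
Proof. gf2. Qed.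

Lemma F2_negb_add (b : bool) : (~~ b)%:R + b%:R = 1 :> F2.
Proof. by case: b; rewrite /= ?addr0 ?add0r. Qed.

Lemma even_or_odd n : exists k, n = k.*2 \/ n = k.*2.+1.
Proof.
have parity := odd_double_half n; exists n./2.
by case: (odd n) in parity *; [right | left]; rewrite -[in LHS]parity.
Qed.

(* r_i = 1 exactly when i + 1 is a power of 2 (the bound j <= i in the
   definition of rbit is automatic). *)
Lemma rbitP i : reflect (exists j, i.+1 = 2 ^ j)%N (rbit i).
Proof.
apply: (iffP existsP) => [[j /eqP ->]|[j hj]]; first by exists j.
have hjn : (j < i.+1)%N by rewrite hj ltn_expl.
by exists (Ordinal hjn); apply/eqP.
Qed.

(* The self-similarity r(t) = 1 + t r(t^2) of the sequence r. *)
Lemma rcoef0 : rcoef 0 = 1.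
Proof.
have /rbitP rbit0 : (exists j, 1 = 2 ^ j)%N by exists 0%N.
by rewrite /rcoef rbit0.
Qed.

Lemma rcoef_odd i : rcoef i.*2.+1 = rcoef i.
Proof.
rewrite /rcoef; congr (nat_of_bool _)%:R; apply/rbitP/rbitP => [[[|j]]|[j hj]].
- by rewrite expn0.
- by rewrite expnS => hj; exists j; lia.
- by exists j.+1; rewrite expnS; lia.
Qed.

Lemma rcoef_even i : rcoef i.*2.+2 = 0.
Proof. by rewrite /rcoef; case: rbitP => // -[[|j]]; rewrite ?expn0 ?expnS //; lia. Qed.

(* Sequences c : nat -> F2 stand for power series in t; tshift c is t * c. *)
Definition tshift (c : nat -> F2) (i : nat) : F2 := if i is j.+1 then c j else 0.

Lemma tshift0 c : tshift c 0 = 0. Proof. by []. Qed.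
Lemma tshiftS c i : tshift c i.+1 = c i. Proof. by []. Qed.

Fixpoint fibp (a : nat) : nat -> F2 :=
  match a with
  | 0 => fun i => (i == 0)%N%:R
  | 1 => fun i => (i <= 1)%N%:R
  | (b.+1 as a').+1 => fun i => fibp a' i + tshift (tshift (fibp b)) i
  end.

Lemma fibp0 i : fibp 0 i = (i == 0)%N%:R. Proof. by []. Qed.
Lemma fibp1 i : fibp 1 i = (i <= 1)%N%:R. Proof. by []. Qed.
Lemma fibpSS a i : fibp a.+2 i = fibp a.+1 i + tshift (tshift (fibp a)) i.
Proof. by []. Qed.
Arguments fibp : simpl never.
Arguments tshift : simpl never.

Lemma fibp_gt a i : (a < i)%N -> fibp a i = 0.
Proof.
elim/ltn_ind: a i => -[|[|a]] IH i hi; rewrite ?fibp0 ?fibp1.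
- by case: i hi.
- by case: i hi => [|[|[|i]]].
case: i hi => [|[|i]] // hi.
by rewrite fibpSS !tshiftS !IH ?addr0 //; lia.
Qed.

Lemma fibp_lead a : fibp a a = 1.
Proof.
elim/ltn_ind: a => -[|[|a]] IH; rewrite ?fibp0 ?fibp1 //.
by rewrite fibpSS !tshiftS fibp_gt // IH // add0r.
Qed.

(* Q_b = P_(b+1) + t P_b, the common even/odd part in fibp_double below;
   it has degree at most b and its coefficient of t^b is 1 iff b is even. *)
Definition fibq (b : nat) (i : nat) : F2 := fibp b.+1 i + tshift (fibp b) i.

Lemma fibq_gt b k : (b < k)%N -> fibq b k = 0.
Proof.
rewrite /fibq; case: k => // k; rewrite tshiftS ltnS leq_eqVlt => /predU1P [<-|hk].
  by rewrite !fibp_lead F2_addxx.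
by rewrite !fibp_gt ?addr0 //; lia.
Qed.

Lemma fibq_lead a : fibq a a = (~~ odd a)%:R.
Proof.
rewrite /fibq; elim/ltn_ind: a => -[|[|a]] IH.
- by rewrite fibp1 tshift0 addr0.
- by rewrite fibpSS !tshiftS tshift0 !fibp1 addr0 F2_addxx.
- rewrite fibpSS !tshiftS fibp_lead fibpSS fibp_lead tshiftS.
  rewrite /= negbK -(IH a) ?ltnSn //; gf2.
Qed.

Lemma fibp_double b i :
  [/\ fibp b.*2.+1 i.*2 = fibq b i, fibp b.*2.+1 i.*2.+1 = fibp b i,
      fibp b.*2.+2 i.*2 = fibp b.+1 i & fibp b.*2.+2 i.*2.+1 = fibq b i].
Proof.
rewrite /fibq; elim: b i => [|b IH] i.
  by case: i => [|[|i]]; split;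
    rewrite ?doubleS ?fibpSS ?tshiftS ?tshift0 ?fibp0 ?fibp1 /= ?addr0 ?add0r ?F2_addxx.
have [_ _ C D] := IH i.
have even3 : fibp b.*2.+3 i.*2 = fibp b.+2 i + tshift (fibp b.+1) i.
  rewrite fibpSS C fibpSS.
  case: i {C D} => [|i]; first by rewrite !tshift0 !addr0.
  by rewrite doubleS !tshiftS; have [-> _ _ _] := IH i; ring.
have odd3 : fibp b.*2.+3 i.*2.+1 = fibp b.+1 i.
  rewrite fibpSS D.
  case: i {C D even3} => [|i]; first by rewrite !tshift0 !addr0.
  by rewrite doubleS !tshiftS; have [_ -> _ _] := IH i; gf2.
split; rewrite doubleS //.
- rewrite fibpSS even3.
  case: i {C D even3 odd3} => [|i]; first by rewrite !tshift0 !addr0.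
  by rewrite doubleS !tshiftS; have [_ _ -> _] := IH i; gf2.
- rewrite fibpSS odd3 [fibp b.+2 i]fibpSS.
  case: i {C D even3 odd3} => [|i]; first by rewrite !tshift0 !addr0.
  by rewrite doubleS !tshiftS; have [_ _ _ ->] := IH i; ring.
Qed.

Definition rconv (c : nat -> F2) (n : nat) : F2 :=
  \sum_(i < n.+1) c i * rcoef (n - i).

Lemma rconv_ext c c' n : c =1 c' -> rconv c n = rconv c' n.
Proof. by move=> eq_c; apply: eq_bigr => i _; rewrite eq_c. Qed.

Lemma rconvD c c' n : rconv (fun i => c i + c' i) n = rconv c n + rconv c' n.
Proof. by rewrite /rconv -big_split; apply: eq_bigr => i _; rewrite mulrDl. Qed.

Lemma rconv_tshift c n : rconv (tshift c) n = tshift (rconv c) n.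
Proof.
rewrite /rconv big_ord_recl tshift0 mul0r add0r.
case: n => [|n]; first by rewrite big_ord0.
by rewrite tshiftS; apply: eq_bigr => i _; rewrite tshiftS subSS.
Qed.

Lemma rconv_fibp0 n : rconv (fibp 0) n = rcoef n.
Proof.
rewrite /rconv big_ord_recl big1 ?addr0 => [|i _]; first by rewrite fibp0 mul1r subn0.
by rewrite fibp0 mul0r.
Qed.

Lemma big_ord_even_odd {V : nmodType} (F : nat -> V) k :
  \sum_(i < k.*2.+1) F i = \sum_(l < k.+1) F l.*2 + \sum_(l < k) F l.*2.+1.
Proof.
elim: k => [|k IH]; first by rewrite !big_ord_recr !big_ord0 /= add0r addr0.
rewrite doubleS [LHS]big_ord_recr [in LHS]big_ord_recr /= IH.
rewrite [in RHS]big_ord_recr [X in _ = _ + X]big_ord_recr /= doubleS.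
by rewrite [RHS]addrACA [F k.*2.+2 + _]addrC addrA.
Qed.

(* Multiplying by r(t) = 1 + t r(t^2): only the odd part of c contributes
   to the earlier even coefficients, only the even part to odd ones. *)
Lemma rconv_even c n :
  rconv c n.*2 = c n.*2 + tshift (rconv (fun l => c l.*2.+1)) n.
Proof.
rewrite /rconv (big_ord_even_odd (fun i => c i * rcoef (n.*2 - i))).
rewrite big_ord_recr /= subnn rcoef0 mulr1 big1 ?add0r => [|l _]; last first.
  have hl := ltn_ord l.
  by rewrite (_ : n.*2 - l.*2 = (n - l).-1.*2.+2)%N ?rcoef_even ?mulr0 //; lia.
congr (_ + _); case: n => [|n]; first by rewrite big_ord0 tshift0.
rewrite tshiftS; apply: eq_bigr => l _; have hl := ltn_ord l.
by rewrite (_ : n.+1.*2 - l.*2.+1 = (n - l).*2.+1)%N ?rcoef_odd //; lia.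
Qed.

Lemma rconv_odd c n : rconv c n.*2.+1 = rconv (fun l => c l.*2) n + c n.*2.+1.
Proof.
rewrite /rconv big_ord_recr /= subnn rcoef0 mulr1.
rewrite (big_ord_even_odd (fun i => c i * rcoef (n.*2.+1 - i))).
rewrite [X in _ + X + _]big1 ?addr0 => [|l _]; last first.
  have hl := ltn_ord l.
  by rewrite (_ : n.*2.+1 - l.*2.+1 = (n - l).-1.*2.+2)%N ?rcoef_even ?mulr0 //; lia.
congr (_ + _); apply: eq_bigr => l _; have hl := ltn_ord l.
by rewrite (_ : n.*2.+1 - l.*2 = (n - l).*2.+1)%N ?rcoef_odd //; lia.
Qed.

Lemma rconv_fibq b k :
  rconv (fibq b) k = rconv (fibp b.+1) k + tshift (rconv (fibp b)) k.
Proof. by rewrite /fibq rconvD rconv_tshift. Qed.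

(* The coefficients of P_a(t) r(t) for a odd/even (first letter) at n even/odd
   (second letter), in terms of P_(b+1)(t) r(t) and P_b(t) r(t). *)
Lemma rconv_fibp_ee b k : rconv (fibp b.*2.+2) k.*2 =
  fibp b.+1 k + tshift (rconv (fibp b.+1)) k + tshift (tshift (rconv (fibp b))) k.
Proof.
rewrite rconv_even; have [_ _ -> _] := fibp_double b k; rewrite -addrA.
congr (_ + _); case: k => [|k]; first by rewrite !tshift0 addr0.
rewrite !tshiftS (@rconv_ext _ (fibq b)) => [|l]; last by case: (fibp_double b l).
by rewrite rconv_fibq.
Qed.

Lemma rconv_fibp_eo b k :
  rconv (fibp b.*2.+2) k.*2.+1 = rconv (fibp b.+1) k + fibq b k.
Proof.
rewrite rconv_odd; have [_ _ _ ->] := fibp_double b k; congr (_ + _).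
by apply: rconv_ext => l; case: (fibp_double b l).
Qed.

Lemma rconv_fibp_oe b k :
  rconv (fibp b.*2.+1) k.*2 = fibq b k + tshift (rconv (fibp b)) k.
Proof.
rewrite rconv_even; have [-> _ _ _] := fibp_double b k; congr (_ + _).
case: k => [|k]; first by rewrite !tshift0.
by rewrite !tshiftS; apply: rconv_ext => l; case: (fibp_double b l).
Qed.

Lemma rconv_fibp_oo b k : rconv (fibp b.*2.+1) k.*2.+1 =
  rconv (fibp b.+1) k + tshift (rconv (fibp b)) k + fibp b k.
Proof.
rewrite rconv_odd; have [_ -> _ _] := fibp_double b k; congr (_ + _).
rewrite (@rconv_ext _ (fibq b)) => [|l]; last by case: (fibp_double b l).
by rewrite rconv_fibq.
Qed.

(* The pattern of P_a(t) r(t): a gap of zeros at t^a .. t^(2a-1), a one at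
   t^(2a), and the coefficient a mod 2 at t^(a-1) (for a > 0), the last one
   being needed to carry the induction. *)
Definition rconv_pattern (a : nat) : Prop :=
  [/\ forall n, (a <= n)%N -> (n < a.*2)%N -> rconv (fibp a) n = 0,
      rconv (fibp a) a.*2 = 1
    & tshift (rconv (fibp a)) a = (odd a)%:R].

Lemma rconv_pattern_even b :
  rconv_pattern b.+1 -> rconv_pattern b -> rconv_pattern b.*2.+2.
Proof.
case=> win1 top1 sub1 [win0 top0 sub0]; rewrite tshiftS in sub1; split.
- move=> n lo hi; have [k [def_n | def_n]] := even_or_odd n; subst n.
  + rewrite rconv_fibp_ee; case: (ltngtP k b.+1) => [hk|hk|->]; first lia.
    * case: k hk lo hi => [|[|k]] hk lo hi; try lia.
      by rewrite fibp_gt // !tshiftS win1 ?win0 ?addr0 //; lia.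
    * by rewrite fibp_lead !tshiftS sub1 sub0 /= -addrA F2_negb_add F2_addxx.
  + by rewrite rconv_fibp_eo win1 ?fibq_gt ?addr0 //; lia.
- rewrite rconv_fibp_ee fibp_gt ?add0r; last lia.
  by rewrite !tshiftS win1 ?top0 ?add0r //; lia.
- by rewrite tshiftS rconv_fibp_eo sub1 fibq_lead /= odd_double /= F2_addxx.
Qed.

Lemma rconv_pattern_odd a :
  rconv_pattern a.+1 -> rconv_pattern a -> rconv_pattern a.*2.+1.
Proof.
case=> win1 top1 sub1 [win0 top0 sub0]; rewrite tshiftS in sub1; split.
- move=> n lo hi; have [k [def_n | def_n]] := even_or_odd n; subst n.
  + rewrite rconv_fibp_oe; case: k lo hi => [|k] lo hi; first lia.
    by rewrite fibq_gt ?add0r ?tshiftS ?win0 //; lia.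
  + rewrite rconv_fibp_oo; case: (ltngtP k a) => [hk|hk|->]; first lia.
    * case: k hk lo hi => [|k] hk lo hi; first lia.
      by rewrite win1 ?tshiftS ?win0 ?fibp_gt ?addr0 //; lia.
    * by rewrite sub1 sub0 fibp_lead /= F2_negb_add F2_addxx.
- by rewrite rconv_fibp_oe fibq_gt ?add0r ?tshiftS //; lia.
- by rewrite tshiftS rconv_fibp_oe fibq_lead sub0 /= odd_double F2_negb_add.
Qed.

Lemma rconv_pattern_all a : rconv_pattern a.
Proof.
elim/ltn_ind: a => -[|[|a]] IH.
- split=> [n lo hi|//|//]; first lia.
  by rewrite rconv_fibp0 rcoef0.
- have conv0 : rconv (fibp 1) 0 = 1.
    by rewrite (rconv_fibp_oe 0 0) /fibq fibp1 !tshift0 !addr0.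
  split=> [n lo hi|//|//].
  + have -> : n = 0.*2.+1 by lia.
    by rewrite (rconv_fibp_oo 0 0) conv0 tshift0 fibp0 addr0 F2_addxx.
  + by rewrite (rconv_fibp_oe 0 1) fibq_gt // tshiftS rconv_fibp0 rcoef0 add0r.
- have [b [def_a | def_a]] := even_or_odd a; subst a.
  + by apply: rconv_pattern_even; apply: IH; lia.
  + rewrite -doubleS; apply: rconv_pattern_odd; apply: IH; lia.
Qed.

Definition xzmon (D i : nat) : 'X_{1..2} :=
  (U_(0%R : 'I_2) *+ (D - i) + U_(1%R : 'I_2) *+ i)%MM.

Lemma xzmon_x D i : xzmon D i (0 : 'I_2) = (D - i)%N.
Proof. by rewrite /xzmon mnmDE !mulmnE !mnm1E /= mul1n mul0n addn0. Qed.

Lemma xzmon_z D i : xzmon D i (1 : 'I_2) = i.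
Proof. by rewrite /xzmon mnmDE !mulmnE !mnm1E /= mul1n mul0n. Qed.

Lemma mnm2P (m m' : 'X_{1..2}) :
  m (0 : 'I_2) = m' (0 : 'I_2) -> m (1 : 'I_2) = m' (1 : 'I_2) -> m = m'.
Proof.
move=> e0 e1; apply/mnmP => -[[|[|//]] j2].
- by rewrite (_ : Ordinal j2 = 0) //; apply/val_inj.
- by rewrite (_ : Ordinal j2 = 1) //; apply/val_inj.
Qed.

Lemma mdeg_xzmon D i : (i <= D)%N -> mdeg (xzmon D i) = D.
Proof. by move=> h; rewrite /xzmon mdegD !mdegMn !mdeg1 !mul1n subnK. Qed.

Lemma xzmon_inj D i j : xzmon D i = xzmon D j -> i = j.
Proof. by move=> h; rewrite -(xzmon_z D i) h xzmon_z. Qed.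

Lemma xzmonSz D i : (i <= D)%N -> xzmon D.+1 i.+1 = (U_(1%R : 'I_2) + xzmon D i)%MM.
Proof. by move=> h; apply: mnm2P; rewrite ?xzmon_x ?xzmon_z mnmDE mnm1E ?xzmon_x ?xzmon_z. Qed.

Lemma xzmonSx D i : (i <= D)%N -> xzmon D.+1 i = (U_(0%R : 'I_2) + xzmon D i)%MM.
Proof.
by move=> h; apply: mnm2P; rewrite ?xzmon_x ?xzmon_z mnmDE mnm1E ?xzmon_x ?xzmon_z //=; lia.
Qed.

Definition form (D : nat) (c : nat -> F2) : R2 :=
  \sum_(i < D.+1) c i *: 'X_[xzmon D i].

Lemma form_coef D c m :
  (form D c)@_m = \sum_(i < D.+1) c i * (xzmon D i == m)%:R.
Proof.
rewrite /form; elim/big_rec2: _ => [|i y p _ <-]; first by rewrite mcoeff0.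
by rewrite mcoeffD mcoeffZ mcoeffX.
Qed.

Lemma form_coef_xzmon D c j : (j <= D)%N -> (form D c)@_(xzmon D j) = c j.
Proof.
move=> hj; rewrite form_coef (bigD1 (Ordinal (hj : (j < D.+1)%N))) //= eqxx mulr1.
rewrite big1 ?addr0 // => i hi; case: eqP => [/xzmon_inj h|_]; last by rewrite mulr0.
by move: hi; rewrite -val_eqE /= h eqxx.
Qed.

Lemma msupp_form D c :
  {subset msupp (form D c) <= [seq xzmon D i | i <- iota 0 D.+1]}.
Proof.
move=> m; rewrite mcoeff_msupp form_coef; apply: contraR => hm.
rewrite big1 // => i _; case: eqP => [def_m|_]; last by rewrite mulr0.
by case/mapP: hm; exists (nat_of_ord i); rewrite // mem_iota add0n ltn_ord.
Qed.

Lemma big_msupp_sub {n : nat} {R : nzRingType} {V : nmodType}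
    (p : {mpoly R[n]}) (s : seq 'X_{1..n}) (G : 'X_{1..n} -> V) :
  uniq s -> {subset msupp p <= s} -> (forall m, p@_m = 0 -> G m = 0) ->
  \sum_(m <- msupp p) G m = \sum_(m <- s) G m.
Proof.
move=> s_uniq sub G0.
rewrite [RHS](bigID (fun m => m \in msupp p)) /= [X in _ + X]big1 ?addr0; last first.
  by move=> m /memN_msupp_eq0 /G0.
rewrite -[RHS]big_filter; apply: perm_big; apply: uniq_perm.
- exact: msupp_uniq.
- exact: filter_uniq.
- by move=> m; rewrite mem_filter; case: (boolP (m \in msupp p)) => //= /sub.
Qed.

Lemma tdeg_form D c : c D != 0 -> tdeg (form D c) = D.
Proof.
move=> cD; have lead : xzmon D D \in msupp (form D c).
  by rewrite mcoeff_msupp form_coef_xzmon.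
rewrite /tdeg msizeE; apply/eqP; rewrite -eqSS prednK; last first.
  exact: leq_trans _ (@leq_bigmax_seq _ _ xpredT (fun m => (mdeg m).+1) _ lead isT).
rewrite eqn_leq; apply/andP; split.
  apply/bigmax_leqP_seq => m /msupp_form /mapP [i].
  by rewrite mem_iota add0n ltnS => hi ->; rewrite mdeg_xzmon.
apply: leq_trans (@leq_bigmax_seq _ _ xpredT (fun m => (mdeg m).+1) _ lead isT).
by rewrite mdeg_xzmon.
Qed.

Lemma eval_xzmon D i : ('X_[xzmon D i] : R2).@[pt01] = (D - i == 0)%N%:R.
Proof.
rewrite mevalX !big_ord_recr big_ord0 /= mul1r.
rewrite (_ : widen_ord _ _ = 0); last exact/val_inj.
rewrite (_ : ord_max = 1); last exact/val_inj.
rewrite xzmon_x xzmon_z expr1n mulr1.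
by case: (D - i)%N => [|k]; rewrite ?expr0 // exprS mul0r.
Qed.

Lemma eval_form D c : (form D c).@[pt01] = c D.
Proof.
rewrite /form raddf_sum big_ord_recr /= big1 ?add0r => [|i _].
  by rewrite mevalZ eval_xzmon subnn mulr1.
rewrite mevalZ eval_xzmon (_ : (D - i == 0)%N = false) ?mulr0 //.
by apply/negbTE; rewrite subn_eq0 -ltnNge.
Qed.

Lemma formD D c c' : form D c + form D c' = form D (fun i => c i + c' i).
Proof. by rewrite /form -big_split; apply: eq_bigr => i _; rewrite scalerDl. Qed.

Lemma form_ext D c c' :
  (forall i, (i <= D)%N -> c i = c' i) -> form D c = form D c'.
Proof. by move=> eq_c; apply: eq_bigr => i _; rewrite eq_c // -ltnS. Qed.

Lemma mulZ_form D c : Z * form D c = form D.+1 (tshift c).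
Proof.
rewrite /form [RHS]big_ord_recl tshift0 scale0r add0r mulr_sumr.
apply: eq_bigr => i _; rewrite -scalerAr xzmonSz ?mpolyXD //.
by rewrite -ltnS.
Qed.

Lemma mulX_form D c : c D.+1 = 0 -> X * form D c = form D.+1 c.
Proof.
move=> cD1; rewrite /form [RHS]big_ord_recr /= cD1 scale0r addr0 mulr_sumr.
apply: eq_bigr => i _; rewrite -scalerAr xzmonSx ?mpolyXD //.
by rewrite -ltnS.
Qed.

Lemma form1 c : form 1 c = c 0%N *: X + c 1%N *: Z.
Proof.
rewrite /form !big_ord_recr big_ord0 /= add0r /X /Z.
congr (_ *: 'X_[_] + _ *: 'X_[_]).
- by apply: mnm2P; rewrite ?xzmon_x ?xzmon_z mnm1E.
- by apply: mnm2P; rewrite ?xzmon_x ?xzmon_z mnm1E.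
Qed.

Lemma Delta_match (i j n D : nat) : (i < n)%N -> (j <= D)%N -> (D < n)%N ->
  (((D - j)%N%:Z - i%:Z == D%:Z + (1 - n%:Z)) && (j%:Z + (1 - n%:Z + i%:Z) == 0))
  = (i == n.-1 - j)%N.
Proof.
move=> hi hj hD; apply/andP/eqP => [[/eqP e1 /eqP e2] | e]; first lia.
by split; apply/eqP; lia.
Qed.

Lemma Delta_form D c n :
  (D < n)%N -> c D != 0 -> (forall i, (D < i)%N -> c i = 0) ->
  Delta (form D c) n = rconv c n.-1.
Proof.
move=> hDn cD c_gt; rewrite /Delta tdeg_form // ifT; last lia.
have mons_uniq : uniq [seq xzmon D i | i <- iota 0 D.+1].
  by rewrite map_inj_uniq ?iota_uniq //; apply: xzmon_inj.
rewrite (big_msupp_sub _ _ _ mons_uniq); last 2 first.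
- exact: msupp_form.
- by move=> m c0; apply: big1 => i _; rewrite c0 mul0r; case: ifP.
rewrite big_map -(subn0 D.+1) -/(index_iota 0 D.+1) big_mkord.
rewrite (eq_bigr (fun i : 'I_D.+1 => c i * rcoef (n.-1 - i))); last first.
  move=> i _; have hi : (i <= D)%N by rewrite -ltnS.
  have hk : (n.-1 - i < n)%N by lia.
  rewrite (bigD1 (Ordinal hk)) //= xzmon_x xzmon_z form_coef_xzmon // Delta_match // eqxx.
  rewrite big1 ?addr0 // => k hk'; rewrite Delta_match //; case: eqP => // hkk.
  by move: hk'; rewrite -val_eqE /= hkk eqxx.
rewrite /rconv prednK; last lia.
rewrite (big_ord_widen n (fun i => c i * rcoef (n.-1 - i)) hDn) big_mkcond.
apply: eq_bigr => i _; case: ifP => // /negbT; rewrite -leqNgt => hi.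
by rewrite c_gt ?mul0r.
Qed.

Lemma Delta_fibp j n : (j < n)%N -> Delta (form j (fibp j)) n = rconv (fibp j) n.-1.
Proof. by move=> hjn; rewrite Delta_form ?fibp_lead ?oner_eq0 // => i; apply: fibp_gt. Qed.

Lemma fgS k : fg k.+1 = step k (fg k).
Proof. by []. Qed.

Lemma step_Delta0 k p : Deltak k p = 0 -> step k p = (p.1, Z * p.2).
Proof. by move=> D0; rewrite /step D0 eqxx. Qed.

Lemma step_Delta1 k p :
  Deltak k p = 1 -> dd p = 1 -> step k p = (X * p.1 + p.2, Z * p.1).
Proof. by move=> D1 d1; rewrite /step D1 d1 /= expr1. Qed.

Definition fg_even (j : nat) : R2 * R2 :=
  (form j.+1 (fibp j.+1), form j.+1 (tshift (fibp j))).
Definition fg_odd (j : nat) : R2 * R2 :=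
  (form j.+1 (fibp j.+1), form j.+2 (tshift (tshift (fibp j)))).

Lemma Deltak_fg_even j : Deltak j.*2 (fg_even j) = 0.
Proof.
rewrite /Deltak Delta_fibp /=; last lia.
by have [win _ _] := rconv_pattern_all j.+1; apply: win; lia.
Qed.

Lemma Deltak_fg_odd j : Deltak j.*2.+1 (fg_odd j) = 1.
Proof.
rewrite /Deltak Delta_fibp /=; last lia.
by have [_ top _] := rconv_pattern_all j.+1; rewrite -doubleS.
Qed.

Lemma dd_fg_odd j : dd (fg_odd j) = 1.
Proof. by rewrite /dd !tdeg_form /= ?tshiftS ?fibp_lead ?oner_eq0 //; lia. Qed.

Lemma step_fg_even j : step j.*2 (fg_even j) = fg_odd j.
Proof. by rewrite step_Delta0 ?Deltak_fg_even //= mulZ_form. Qed.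

Lemma step_fg_odd j : step j.*2.+1 (fg_odd j) = fg_even j.+1.
Proof.
rewrite step_Delta1 ?Deltak_fg_odd ?dd_fg_odd //= mulX_form ?fibp_gt // formD mulZ_form.
by congr (_, _); apply: form_ext => i _; rewrite fibpSS.
Qed.

Lemma fg_closed j : fg j.*2 = fg_even j /\ fg j.*2.+1 = fg_odd j.
Proof.
have odd_from_even i : fg i.*2 = fg_even i -> fg i.*2.+1 = fg_odd i.
  by move=> fg_i; rewrite fgS fg_i step_fg_even.
elim: j => [|j [_ fg_odd_j]].
  suff fg0 : fg 0 = fg_even 0 by split; last exact: odd_from_even.
  by rewrite /fg_even /= !form1 !fibp1 tshift0 tshiftS fibp0 /= !scale1r scale0r add0r.
suff fg_even_j1 : fg j.+1.*2 = fg_even j.+1 by split; last exact: odd_from_even.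
by rewrite doubleS fgS fg_odd_j step_fg_odd.
Qed.

Theorem theorem4 (k : nat) :
  [/\ (~~ odd k -> Deltak k (fg k) = 0) /\
      (odd k -> Deltak k (fg k) = 1 /\ dd (fg k) = 1),
      fg k.+1 = (if ~~ odd k then ((fg k).1, Z * (fg k).2)
                 else (X * (fg k).1 + (fg k).2, Z * (fg k).1)),
      tdeg (fg k.+1).1 = ((k + 3) %/ 2)%N
    & ((fg k.+1).1).@[pt01] = 1 /\ ((fg k.+1).2).@[pt01] = 1].
Proof.
have [j [def_k | def_k]] := even_or_odd k; subst k.
- have [fg_e fg_o] := fg_closed j.
  have D0 : Deltak j.*2 (fg j.*2) = 0 by rewrite fg_e Deltak_fg_even.
  rewrite odd_double fg_o; split => //.
  + by rewrite -fg_o fgS step_Delta0.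
  + by rewrite tdeg_form ?fibp_lead ?oner_eq0 //; lia.
  + by rewrite !eval_form !tshiftS !fibp_lead.
- have [_ fg_o] := fg_closed j; have [fg_e1 _] := fg_closed j.+1.
  have D1 : Deltak j.*2.+1 (fg j.*2.+1) = 1 by rewrite fg_o Deltak_fg_odd.
  have d1 : dd (fg j.*2.+1) = 1 by rewrite fg_o dd_fg_odd.
  rewrite oddS odd_double -doubleS fg_e1; split => //.
  + by rewrite -fg_e1 doubleS fgS step_Delta1.
  + by rewrite tdeg_form ?fibp_lead ?oner_eq0 //; lia.
  + by rewrite !eval_form !tshiftS !fibp_lead.
Qed.
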